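(* Let $G_{\max}=(V,E_{\max})$ be a finite, simple, connected, undirected graph, and let $\lambda',\mu',\gamma'>0$ with $\frac{\lambda'}{\mu'}>1$ and $0<\gamma'\le 1$ (Regime III). For a network state $\mathbf{A}$ (a subset $E(\mathbf{A})\subseteq E_{\max}$ of closed edges) let $g(E(\mathbf{A}))$ be the number of $P_3$ subgraphs (paths with 3 vertices) formed by $E(\mathbf{A})$, and call a maximizer of $\pi(\mathbf{A})\propto(\lambda'/\mu')^{|E(\mathbf{A})|}\gamma'^{\,g(E(\mathbf{A}))}$ over all network states a most-probable network (for SUD-DBP). If $\lambda'\gamma'<\mu'$, then the most-probable networks are exactly the network states $\mathbf{A}^*$ with $g(E(\mathbf{A}^* ))=0$ and $|E(\mathbf{A}^* )|$ maximum among such states; equivalently, $E(\mathbf{A}^* )$ is a maximum matching of $G_{\max}$.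
   Context: A matching of a graph is a set of edges no two of which share a vertex; a maximum matching is a matching with the largest possible number of edges. *)

From HB Require Import structures.
From mathcomp Require Import all_boot all_order all_algebra.
Set Implicit Arguments. Unset Strict Implicit. Unset Printing Implicit Defensive.
Import Order.TTheory GRing.Theory Num.Theory.

(* A finite simple undirected graph on vertex type V is given by its edge set
   Emax : {set {set V}}, every edge being a 2-element vertex set. *)
Definition simple_graph (V : finType) (Emax : {set {set V}}) : Prop :=
  forall e, e \in Emax -> #|e| = 2.

Definition adj (V : finType) (Emax : {set {set V}}) : rel V :=
  fun x y => [set x; y] \in Emax.

Definition connected_graph (V : finType) (Emax : {set {set V}}) : Prop :=
  forall x y : V, connect (adj Emax) x y.

(* g(E): the number of P3 subgraphs formed by the edge set E, i.e. the number
   of unordered pairs of distinct edges of E sharing a vertex. *)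
Definition gP3 (V : finType) (E : {set {set V}}) : nat :=
  #|[set P : {set {set V}} | [&& P \subset E, #|P| == 2 &
      [exists e1 in P, exists e2 in P, (e1 != e2) && ~~ [disjoint e1 & e2]]]]|.

Definition weight (R : realFieldType) (lam mu gam : R) (V : finType)
  (E : {set {set V}}) : R :=
  ((lam / mu) ^+ #|E| * gam ^+ gP3 E)%R.

Definition most_probable (R : realFieldType) (lam mu gam : R) (V : finType)
  (Emax A : {set {set V}}) : Prop :=
  A \subset Emax /\
  forall B : {set {set V}}, B \subset Emax -> (weight lam mu gam B <= weight lam mu gam A)%R.

Definition is_matching (V : finType) (Emax M : {set {set V}}) : Prop :=
  M \subset Emax /\
  forall e1 e2, e1 \in M -> e2 \in M -> e1 != e2 -> [disjoint e1 & e2].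

Definition is_maximum_matching (V : finType) (Emax M : {set {set V}}) : Prop :=
  is_matching Emax M /\ forall N, is_matching Emax N -> #|N| <= #|M|.

From mathcomp Require Import all_boot all_order all_algebra.
Import Order.TTheory GRing.Theory Num.Theory.
Set Implicit Arguments. Unset Strict Implicit.
Local Open Scope ring_scope.

(* Write r = lam/mu > 1.  If a state has two adjacent closed edges, deleting
   one of them divides the weight by r but removes at least one P3, so the
   weight is multiplied by at least 1/(r gam) > 1.  Hence every
   most-probable state is P3-free, i.e. a matching, and on matchings the
   weight is r^|E|, which is strictly increasing in |E|. *)

Section P3Count.
Variable V : finType.
Implicit Types E B : {set {set V}}.

Lemma adjacent_pair_in_P3 E e1 e2 :
  e1 \in E -> e2 \in E -> e1 != e2 -> ~~ [disjoint e1 & e2] ->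
  [&& [set e1; e2] \subset E, #|[set e1; e2]| == 2 &
      [exists f1 in [set e1; e2], exists f2 in [set e1; e2],
         (f1 != f2) && ~~ [disjoint f1 & f2]]].
Proof.
move=> E1 E2 ne12 meet12; apply/and3P; split.
- by apply/subsetP => x; rewrite !inE => /orP[] /eqP ->.
- by rewrite cards2 ne12.
- apply/existsP; exists e1; rewrite !inE eqxx /=.
  by apply/existsP; exists e2; rewrite !inE eqxx orbT ne12 meet12.
Qed.

Lemma gP3_eq0P E :
  gP3 E = 0%N <->
  forall e1 e2, e1 \in E -> e2 \in E -> e1 != e2 -> [disjoint e1 & e2].
Proof.
split=> [g0 e1 e2 E1 E2 ne12 | disjE].
  apply/negPn/negP => meet12.
  have P3_12 := adjacent_pair_in_P3 E1 E2 ne12 meet12.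
  have /card0_eq/(_ [set e1; e2]) := g0.
  by rewrite inE P3_12.
apply/eqP; rewrite cards_eq0; apply/eqP/setP => P; rewrite !inE.
apply/negbTE/negP => /and3P[/subsetP sPE _ /existsP[e1 /andP[P1]]].
case/existsP=> e2 /andP[P2 /andP[ne12]].
by rewrite disjE ?sPE.
Qed.

Lemma is_matchingE Emax B :
  is_matching Emax B <-> B \subset Emax /\ gP3 B = 0%N.
Proof. by split=> -[sBE disjB]; split=> //; apply/gP3_eq0P. Qed.

Lemma gP3_setD1_lt E e1 e2 :
  e1 \in E -> e2 \in E -> e1 != e2 -> ~~ [disjoint e1 & e2] ->
  (gP3 (E :\ e1) < gP3 E)%N.
Proof.
move=> E1 E2 ne12 meet12; apply: proper_card; apply/properP; split.
  apply/subsetP => P; rewrite !inE => /and3P[sP -> ->].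
  by rewrite (subset_trans sP) ?subsetDl.
exists [set e1; e2]; first by rewrite inE adjacent_pair_in_P3.
rewrite inE; apply/negP => /and3P[/subsetP s12 _ _].
by have := s12 e1; rewrite !inE eqxx => /(_ isT).
Qed.

End P3Count.

Section Weight.
Variables (R : realFieldType) (lam mu gam : R).
Hypotheses (gam_gt0 : 0 < gam) (gam_le1 : gam <= 1)
  (ratio_gt1 : 1 < lam / mu) (ratio_gam_lt1 : lam / mu * gam < 1).

Let ratio_gt0 : 0 < lam / mu. Proof. exact: lt_trans ratio_gt1. Qed.

Lemma weight_P3_free (V : finType) (B : {set {set V}}) :
  gP3 B = 0%N -> weight lam mu gam B = (lam / mu) ^+ #|B|.
Proof. by move=> g0; rewrite /weight g0 expr0 mulr1. Qed.

Lemma weight_setD1_gt (V : finType) (B : {set {set V}}) e :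
  e \in B -> (gP3 (B :\ e) < gP3 B)%N ->
  weight lam mu gam B < weight lam mu gam (B :\ e).
Proof.
move=> Be ltg; rewrite /weight (cardsD1 e B) Be exprSr.
set r := lam / mu; set w := r ^+ #|B :\ e| * gam ^+ gP3 (B :\ e).
have w_gt0 : 0 < w by rewrite mulr_gt0 ?exprn_gt0.
apply: (@le_lt_trans _ _ (w * (r * gam))); last by rewrite gtr_pMr.
have -> : w * (r * gam) = r ^+ #|B :\ e| * r * gam ^+ (gP3 (B :\ e)).+1.
  by rewrite /w exprS mulrACA [gam ^+ _ * gam]mulrC.
rewrite ler_pM2l ?(mulr_gt0 (exprn_gt0 _ ratio_gt0)) //.
exact: ler_wiXn2l (ltW gam_gt0) gam_le1 _ _ ltg.
Qed.

Lemma matching_weight_ge (V : finType) (B : {set {set V}}) :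
  exists M : {set {set V}}, [/\ is_matching B M,
    weight lam mu gam B <= weight lam mu gam M &
    gP3 B != 0%N -> weight lam mu gam B < weight lam mu gam M].
Proof.
elim: {B}_.+1 {-2}B (ltnSn #|B|) => // n IHn B ltBn.
have [g0 | gn0] := eqVneq (gP3 B) 0%N.
  by exists B; split; rewrite ?g0 ?eqxx //; apply/is_matchingE.
have /existsP[e1 /andP[B1 /existsP[e2 /andP[B2 /andP[ne12 meet12]]]]] :
    [exists e1 in B, exists e2 in B, (e1 != e2) && ~~ [disjoint e1 & e2]].
  apply: contraNT gn0 => noadj; apply/eqP/gP3_eq0P => e1 e2 B1 B2 ne12.
  apply/negPn; apply: contra noadj => meet12.
  by apply/existsP; exists e1; rewrite B1; apply/existsP; exists e2; rewrite B2 ne12.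
have ltw := weight_setD1_gt B1 (gP3_setD1_lt B1 B2 ne12 meet12).
have [|M [/is_matchingE[sM gM] leM _]] := IHn (B :\ e1).
  by rewrite -ltnS (leq_trans _ ltBn) // ltnS (cardsD1 e1 B) B1.
exists M; split=> [||_]; last exact: lt_le_trans leM.
- by apply/is_matchingE; split=> //; apply: subset_trans sM (subD1set _ _).
- exact/ltW/(lt_le_trans ltw).
Qed.

Lemma most_probable_maximum_matching (V : finType) (Emax A : {set {set V}}) :
  most_probable lam mu gam Emax A <-> is_maximum_matching Emax A.
Proof.
split=> [[sA maxA] | [/is_matchingE[sA gA] maxA]].
  have gA : gP3 A = 0%N.
    apply/eqP/negP => /negP gAn0.
    have [M [/is_matchingE[sMA _] _ /(_ gAn0)]] := matching_weight_ge A.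
    by rewrite ltNge maxA // (subset_trans sMA sA).
  split; first exact/is_matchingE.
  move=> N /is_matchingE[sN gN]; have := maxA N sN.
  by rewrite !weight_P3_free // ler_eXn2l.
split=> // B sB.
have [M [/is_matchingE[sMB gM] leBM _]] := matching_weight_ge B.
apply: le_trans leBM _; rewrite !weight_P3_free // ler_eXn2l //.
by apply: maxA; apply/is_matchingE; split=> //; apply: subset_trans sB.
Qed.

End Weight.

Theorem theorem6 (R : realFieldType) (V : finType) (Emax : {set {set V}})
  (lam mu gam : R) :
  simple_graph Emax -> connected_graph Emax ->
  0 < lam -> 0 < mu -> 0 < gam -> 1 < lam / mu -> gam <= 1 ->
  lam * gam < mu ->
  forall A : {set {set V}},
    (most_probable lam mu gam Emax A <->
       [/\ A \subset Emax, gP3 A = 0%N &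
           forall B : {set {set V}}, B \subset Emax -> gP3 B = 0%N ->
             (#|B| <= #|A|)%N]) /\
    (most_probable lam mu gam Emax A <-> is_maximum_matching Emax A).
Proof.
move=> _ _ _ mu_gt0 gam_gt0 ratio_gt1 gam_le1 lam_gam_lt A.
have ratio_gam_lt1 : lam / mu * gam < 1 by rewrite mulrAC ltr_pdivrMr ?mul1r.
have mpE := most_probable_maximum_matching gam_gt0 gam_le1 ratio_gt1
  ratio_gam_lt1 Emax A.
split=> //; apply: iff_trans mpE _; split.
  by case=> /is_matchingE[sA gA] maxA; split=> // B sB gB; apply/maxA/is_matchingE.
case=> sA gA maxA; split; first exact/is_matchingE.
by move=> N /is_matchingE[]; apply: maxA.
Qed.
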